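(* Let $N\ge1$, $T>0$, $M>0$, and let $\alpha\in\mathcal U_M$ be an optimal control for the problem of minimizing $\mathbb V(T)=\frac1N\sum_{i=1}^N\xi_i(T)^2$ over $\mathcal U_M$, where $\xi$ solves $\dot\xi_i=-\xi_i+(1-\alpha_i)\bar\xi$, $\bar\xi=\frac1N\sum_j\xi_j$, from a fixed initial datum $\xi(0)$ with $\bar\xi(0)>0$ and $\xi_1(0)\ge\dots\ge\xi_N(0)$. Let $\lambda=(\lambda_1,\dots,\lambda_N)$ be a covector associated with $\alpha$ by the Pontryagin maximum principle, i.e. $\dot\lambda_i=\frac1N\sum_{j}\alpha_j\lambda_j-\bar\lambda+\lambda_i$ with $\bar\lambda=\frac1N\sum_j\lambda_j$, $\lambda_i(T)=\frac2N\xi_i(T)$, and for almost every $t$, $\alpha(t)$ minimizes $a\mapsto -\bar\xi(t)\sum_i a_i\lambda_i(t)$ over $a\in[0,1]^N$ with $\sum_i a_i\le M$. Define $I_\lambda(t)=\{i:\lambda_i(t)\ge0\}$ and $I_\lambda^+(t)=\{i:\lambda_i(t)>0\}$. Then for almost every $t\in[0,T]$: if $I_\lambda(t)=\emptyset$, then $\alpha_i(t)=0$ for every $i$; if $I_\lambda^+(t)\neq\emptyset$, then there exists $i\in I_\lambda^+(t)$ with $\alpha_i(t)>0$, and $\sum_j\alpha_j(t)\ge\min(|I_\lambda^+(t)|,M)$.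
   Context: $\mathcal U_M$ is the set of measurable $\alpha:[0,T]\to[0,1]^N$ with $\sum_i\alpha_i(t)\le M$ for all $t$. The variables $\xi_i$ are the projections of the agents' velocities on the direction of the mean velocity in a collective migration model with target velocity $0$. $|\cdot|$ is cardinality. *)

From HB Require Import structures.
From mathcomp Require Import all_boot all_order all_algebra.
From mathcomp Require Import all_classical all_reals all_analysis.
Set Implicit Arguments. Unset Strict Implicit. Unset Printing Implicit Defensive.
Import Order.TTheory GRing.Theory Num.Theory.
Import numFieldNormedType.Exports.
Local Open Scope classical_set_scope.
Local Open Scope ring_scope.

Section Defs.
Variable R : realType.
Variable N : nat.

Definition mean (f : 'I_N -> R) : R := (\sum_(i < N) f i) / N%:R.

Definition admissible (M T : R) (alpha : 'I_N -> R -> R) : Prop :=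
  (forall i, measurable_fun (`[0, T]%classic) (alpha i)) /\
  (forall t, t \in `[0, T] ->
     (forall i, 0 <= alpha i t <= 1) /\ \sum_(i < N) alpha i t <= M).

(* xi is a (Caratheodory) solution on [0,T] of
   xi_i' = - xi_i + (1 - alpha_i) * mean xi, xi(0) = xi0. *)
Definition trajectory (T : R) (alpha : 'I_N -> R -> R) (xi0 : 'I_N -> R)
    (xi : 'I_N -> R -> R) : Prop :=
  forall i, {within `[0, T]%classic, continuous (xi i)} /\
   forall t, t \in `[0, T] ->
     xi i t = xi0 i + \int[(@lebesgue_measure R)]_(s in `[0, t]%classic)
                       (- xi i s + (1 - alpha i s) * mean (fun j => xi j s)).

Definition cost (T : R) (xi : 'I_N -> R -> R) : R :=
  mean (fun i => xi i T ^+ 2).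

(* lambda solves lambda_i' = (1/N) sum_j alpha_j lambda_j - mean lambda + lambda_i
   on [0,T], with lambda_i(T) = (2/N) xi_i(T). *)
Definition covector (T : R) (alpha xi lam : 'I_N -> R -> R) : Prop :=
  forall i, {within `[0, T]%classic, continuous (lam i)} /\
   lam i T = 2 / N%:R * xi i T /\
   forall t, t \in `[0, T] ->
     lam i t = lam i T - \int[(@lebesgue_measure R)]_(s in `[t, T]%classic)
        (mean (fun j => alpha j s * lam j s) - mean (fun j => lam j s) + lam i s).

Definition Ilam (lam : 'I_N -> R -> R) (t : R) : {set 'I_N} :=
  [set i | 0 <= lam i t]%SET.
Definition Ilamp (lam : 'I_N -> R -> R) (t : R) : {set 'I_N} :=
  [set i | 0 < lam i t]%SET.

End Defs.

(* Along any admissible control the total velocity S = sum_i xi_i satisfies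
   S' = - abar S with abar = (1/N) sum_i alpha_i in [0, 1], so S, and with it the
   mean velocity, stays positive on [0, T]; this is checked on successive
   intervals of length 1/2 by comparing S with its extrema there.  Dividing the
   maximum condition by - mean xi(t) < 0 shows that alpha(t) maximizes
   a |-> sum_i a_i lam_i(t) over {a in [0,1]^N | sum_i a_i <= M}, and the three
   conclusions are elementary properties of such a maximizer, obtained by moving
   mass onto or off a single coordinate. *)

From HB Require Import structures.
From mathcomp Require Import all_boot all_order all_algebra.
From mathcomp Require Import all_classical all_reals all_analysis.
From mathcomp Require Import ring lra.
Import Order.TTheory GRing.Theory Num.Theory.
Import numFieldNormedType.Exports.
Local Open Scope ring_scope.

Section capped_simplex_maximizer.
Context {R : realFieldType} {N : nat} {M : R} {al lam : 'I_N -> R}.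
Hypotheses (al01 : forall i, 0 <= al i <= 1) (alM : \sum_(i < N) al i <= M).
Hypothesis al_max : forall a : 'I_N -> R, (forall i, 0 <= a i <= 1) ->
  \sum_(i < N) a i <= M -> \sum_(i < N) a i * lam i <= \sum_(i < N) al i * lam i.

Lemma maximizer_shift (i : 'I_N) (x : R) :
  0 <= al i + x <= 1 -> \sum_(j < N) al j + x <= M -> x * lam i <= 0.
Proof.
move=> alx01 alxM.
pose a j := al j + (if j == i then x else 0).
have delta (g : 'I_N -> R) : \sum_(j < N) (if j == i then g j else 0) = g i.
  by rewrite -big_mkcond big_pred1_eq.
have sum_shift (f : 'I_N -> R) :
    \sum_(j < N) a j * f j = \sum_(j < N) al j * f j + x * f i.
  rewrite -(delta (fun j => x * f j)) -big_split /=.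
  by apply: eq_bigr => j _; rewrite /a mulrDl; case: eqP => [->|_]; rewrite ?mul0r.
have sum_a : \sum_(j < N) a j = \sum_(j < N) al j + x.
  by rewrite big_split /= (delta (fun=> x)).
have := al_max a; rewrite sum_shift sum_a gerDl; apply=> // j.
by rewrite /a; case: eqP => [->//|_]; rewrite addr0.
Qed.

Lemma maximizer_eq0 (i : 'I_N) : lam i < 0 -> al i = 0.
Proof.
move=> lam_lt0; have /andP[al_ge0 _] := al01 i.
have shift : - al i * lam i <= 0.
  apply: maximizer_shift; first by rewrite subrr lexx ler01.
  by rewrite lerBlDr (le_trans alM) // lerDl.
by apply/eqP; rewrite eq_le al_ge0 andbT; nra.
Qed.

Lemma maximizer_saturates : Num.min #|[set i | 0 < lam i]|%:R M <= \sum_(i < N) al i.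
Proof.
set I := [set i | 0 < lam i]; case: leP => // sum_lt.
have [q /andP[qI alq_lt1]|al_ge1] := pickP [pred q | (q \in I) && (al q < 1)].
  have lam_gt0 : 0 < lam q by move: qI; rewrite inE.
  set e := Num.min (1 - al q) (M - \sum_(j < N) al j).
  have e_gt0 : 0 < e.
    by rewrite lt_min !subr_gt0 alq_lt1; move: sum_lt; rewrite lt_min => /andP[].
  have : e * lam q <= 0.
    apply: maximizer_shift; have /andP[alq_ge0 _] := al01 q.
      by rewrite addr_ge0 ?(ltW e_gt0) //= -lerBrDl /e ge_min lexx.
    by rewrite -lerBrDl /e ge_min lexx orbT.
  by rewrite leNgt pmulr_rgt0 // lam_gt0.
have : #|I|%:R <= \sum_(i < N) al i.
  apply: le_trans (_ : \sum_(i in I) al i <= _).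
    rewrite -sum1_card natr_sum; apply: ler_sum => i iI.
    by move: (al_ge1 i) => /=; rewrite iI /= => /negbT; rewrite -leNgt.
  rewrite [X in _ <= X](bigID [in I]) /= lerDl.
  by apply: sumr_ge0 => i _; case/andP: (al01 i).
by move: sum_lt; rewrite lt_min => /andP[/lt_le_trans h _] /h; rewrite ltxx.
Qed.

Lemma maximizer_gt0_at_pos_weight : 0 < M -> (exists p, 0 < lam p) ->
  exists2 i, 0 < lam i & 0 < al i.
Proof.
move=> M_gt0 [p lam_gt0].
set e := Num.min 1 M; pose a j := if j == p then e else 0.
have e_gt0 : 0 < e by rewrite lt_min ltr01.
have [e_le1 e_leM] : e <= 1 /\ e <= M by rewrite !ge_min !lexx orbT.
have value_gt0 : 0 < \sum_(i < N) al i * lam i.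
  have sum_a (f : 'I_N -> R) : \sum_(j < N) a j * f j = e * f p.
    by rewrite (bigD1 p) //= /a eqxx big1 ?addr0 // => j /negPf ->; rewrite mul0r.
  apply: lt_le_trans (_ : e * lam p <= _); first exact: mulr_gt0.
  rewrite -sum_a; apply: al_max => [j|].
    by rewrite /a; case: eqP; rewrite ?lexx ?ler01 ?e_le1 ?ltW.
  by have := sum_a (fun=> 1); under eq_bigr do rewrite mulr1; move=> ->; rewrite mulr1.
have [i /= term_gt0|terms_le0] := pickP [pred i | 0 < al i * lam i].
  have /andP[al_ge0 _] := al01 i.
  have al_gt0 : 0 < al i.
    by rewrite lt_def al_ge0 andbT; apply: contraTneq term_gt0 => ->; rewrite mul0r ltxx.
  by exists i; rewrite // -(pmulr_rgt0 _ al_gt0).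
suff : \sum_(i < N) al i * lam i <= 0 by rewrite leNgt value_gt0.
by apply: sumr_le0 => i _; rewrite leNgt; move: (terms_le0 i) => /= ->.
Qed.

End capped_simplex_maximizer.

Section Rintegral_itv_oc.
Local Open Scope classical_set_scope.
Local Open Scope ring_scope.
Variable R : realType.
Notation mu := (@lebesgue_measure R).

Lemma integrable_cst_itv_oc (a b K : R) : mu.-integrable `]a, b] (EFin \o cst K).
Proof.
apply: measurable_bounded_integrable => //; last exact: (@bounded_cst R R^o).
have := lebesgue_measure_itv `]a, b]; rewrite /= => ->.
by case: ifP => _; rewrite ?ltry.
Qed.

Lemma Rintegral_cst_itv_oc (a b K : R) : a <= b ->
  \int[mu]_(x in `]a, b]) K = K * (b - a).
Proof.
move=> ab; rewrite Rintegral_cst //; have := lebesgue_measure_itv `]a, b].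
rewrite /= => ->; rewrite lte_fin.
by case: ltgtP ab => // -> _; rewrite subrr mulr0.
Qed.

Lemma Rintegral_itv_oc_le_cst (a b K : R) (H : R -> R) : a <= b ->
  mu.-integrable `]a, b] (EFin \o H) -> (forall r, a < r <= b -> H r <= K) ->
  \int[mu]_(x in `]a, b]) H x <= K * (b - a).
Proof.
move=> ab H_int H_le; rewrite -Rintegral_cst_itv_oc //.
by apply: le_Rintegral => //; exact: integrable_cst_itv_oc.
Qed.

Lemma Rintegral_itv_oc_ge_cst (a b K : R) (H : R -> R) : a <= b ->
  mu.-integrable `]a, b] (EFin \o H) -> (forall r, a < r <= b -> K <= H r) ->
  K * (b - a) <= \int[mu]_(x in `]a, b]) H x.
Proof.
move=> ab H_int H_ge; rewrite -Rintegral_cst_itv_oc //.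
by apply: le_Rintegral => //; exact: integrable_cst_itv_oc.
Qed.

End Rintegral_itv_oc.

Section finite_sums.
Local Open Scope classical_set_scope.
Local Open Scope ring_scope.
Context d (X : measurableType d) (R : realType) (mu : {measure set X -> \bar R}).
Variables (D : set X) (mD : measurable D) (I : Type) (f : I -> X -> R).
Hypothesis f_int : forall i, mu.-integrable D (EFin \o f i).

Lemma integrable_sum_fun (s : seq I) :
  mu.-integrable D (EFin \o (fun x => \sum_(i <- s) f i x)).
Proof.
have := integrable_sum mD s (P := xpredT) (fun i _ => f_int i).
by apply: eq_integrable => // x _; rewrite /= sumEFin.
Qed.

Lemma Rintegral_sum (s : seq I) :
  \int[mu]_(x in D) (\sum_(i <- s) f i x) = \sum_(i <- s) \int[mu]_(x in D) f i x.
Proof.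
elim: s => [|i s IH].
  by under eq_Rintegral do rewrite big_nil; rewrite Rintegral_cst // mul0r big_nil.
under eq_Rintegral do rewrite big_cons.
by rewrite big_cons RintegralD // ?IH //; exact: integrable_sum_fun.
Qed.

End finite_sums.

Section real_functions.
Context {R : realType}.
Local Open Scope classical_set_scope.
Local Open Scope ring_scope.

Lemma within_continuous_sum {A : set R} {I : Type} (s : seq I)
    (f : I -> R -> R) :
  (forall i, {within A, continuous (f i)}) ->
  {within A, continuous (fun x => \sum_(i <- s) f i x)}.
Proof. by move=> f_cont; apply: (continuous_big add_continuous) => i _; exact: f_cont. Qed.

Lemma bounded_of_normr_le {T : Type} (A : set T) (g : T -> R) (K : R) :
  (forall x, A x -> `|g x| <= K) -> [bounded g x | x in A].
Proof.
move=> g_le; rewrite /bounded_near; near=> L => x Ax /=.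
apply: le_trans (g_le x Ax) _; near: L.
by apply: nbhs_pinfty_ge; rewrite num_real.
Unshelve. all: end_near. Qed.

End real_functions.

Section linear_decay_positivity.
Local Open Scope classical_set_scope.
Local Open Scope ring_scope.
Context {R : realType} {T : R} {S H c : R -> R}.
Notation mu := (@lebesgue_measure R).
Hypotheses (S_cont : {within `[0, T], continuous S})
  (H_int : mu.-integrable `[0, T] (EFin \o H))
  (S_eq : forall t, 0 <= t <= T -> S t = S 0 + \int[mu]_(x in `[0, t]) H x)
  (H_eq : forall r, 0 <= r <= T -> H r = - c r * S r)
  (c01 : forall r, 0 <= r <= T -> 0 <= c r <= 1).

Lemma integrable_itv_oc (s w : R) : 0 <= s -> w <= T ->
  mu.-integrable `]s, w] (EFin \o H).
Proof.
move=> s_ge0 wT; apply: integrableS H_int => // x /=; rewrite !in_itv /=.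
by case/andP=> /ltW/(le_trans s_ge0) -> /le_trans ->.
Qed.

Lemma increment_Rintegral (s w : R) : 0 <= s -> s <= w -> w <= T ->
  S w - S s = \int[mu]_(x in `]s, w]) H x.
Proof.
move=> s_ge0 sw wT; have w_ge0 := le_trans s_ge0 sw.
rewrite (S_eq w) ?w_ge0 // (S_eq s) ?s_ge0 ?(le_trans sw wT) // opprD addrACA subrr add0r.
apply: Rintegral_itvB; rewrite ?bnd_simp //.
apply: integrableS H_int => // x /=; rewrite !in_itv /=.
by case/andP=> -> /le_trans ->.
Qed.

Lemma linear_decay_step (s t : R) : 0 <= s -> s <= t -> t <= T -> t - s <= 1 / 2 ->
  0 < S s -> 0 < S t.
Proof.
move=> s_ge0 st tT ts S_s.
have S_cont_st : {within `[s, t], continuous S}.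
  apply: continuous_subspaceW S_cont => x /=; rewrite !in_itv /=.
  by case/andP=> /(le_trans s_ge0) -> /le_trans ->.
have [u u_st S_min] := EVT_min st S_cont_st.
have [v v_st S_max] := EVT_max st S_cont_st.
have st_in (r : R) : s < r <= t -> r \in `[s, t].
  by case/andP=> /ltW sr rt; rewrite in_itv /= sr rt.
have S_v_gt0 : 0 < S v by apply: lt_le_trans S_s (S_max _ _); rewrite in_itv /= lexx st.
have [S_u_gt0|S_u_le0] := ltP 0 (S u).
  by apply: lt_le_trans S_u_gt0 (S_min _ _); rewrite in_itv /= st lexx.
have H_bounds (r : R) : s < r <= t -> - S v <= H r <= - S u.
  move=> /[dup] /st_in r_st /andP[sr rt]; have := S_min r r_st; have := S_max r r_st.
  have r0T : 0 <= r <= T by rewrite (le_trans s_ge0 (ltW sr)) (le_trans rt tT).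
  rewrite H_eq //; have /andP[c_ge0 c_le1] := c01 _ r0T => ? ?.
  by apply/andP; split; nra.
move: u_st v_st; rewrite !in_itv /= => /andP[su ut] /andP[sv vt].
have S_v_le : S v - S s <= - S u * (v - s).
  rewrite increment_Rintegral ?(le_trans vt tT) //; apply: Rintegral_itv_oc_le_cst => //.
    exact: integrable_itv_oc (le_trans vt tT).
  move=> r /andP[sr rv].
  by have /andP[] // : - S v <= H r <= - S u by apply: H_bounds; rewrite sr (le_trans rv vt).
have S_u_ge : - S v * (u - s) <= S u - S s.
  rewrite increment_Rintegral ?(le_trans ut tT) //; apply: Rintegral_itv_oc_ge_cst => //.
    exact: integrable_itv_oc (le_trans ut tT).
  move=> r /andP[sr ru].
  by have /andP[] // : - S v <= H r <= - S u by apply: H_bounds; rewrite sr (le_trans ru ut).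
(* S v <= S s - S u / 2 and S u >= S s - S v / 2 force 3/4 S u >= S s / 2 > 0. *)
have : v - s <= 1 / 2 by lra.
have : u - s <= 1 / 2 by lra.
nra.
Qed.

Lemma linear_decay_gt0 (t : R) : 0 < S 0 -> 0 <= t <= T -> 0 < S t.
Proof.
move=> S0_gt0 /andP[t_ge0 tT].
have pos_upto (k : nat) r : 0 <= r -> r <= T -> 2 * r <= k%:R -> 0 < S r.
  elim: k r => [|k IH] r r_ge0 rT r_le; first by have -> : r = 0 by lra.
  have [|r_gt] := leP (2 * r) k%:R; first exact: IH.
  have k_ge0 : 0 <= k%:R :> R by [].
  move: r_le; rewrite -[k.+1]addn1 natrD => r_le.
  apply: (@linear_decay_step (k%:R / 2)) => //; try lra.
  apply: IH; lra.
have twoT_ge0 : 0 <= 2 * T by lra.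
apply: (pos_upto _ t t_ge0 tT); apply: le_trans (ltW (archi_boundP twoT_ge0)).
by rewrite ler_pM2l.
Qed.

End linear_decay_positivity.

Definition mean_field_rhs {R : realType} {N : nat} (alpha xi : 'I_N -> R -> R)
    (i : 'I_N) (s : R) : R :=
  - xi i s + (1 - alpha i s) * mean (fun j => xi j s).

Lemma mean_in01 (R : realType) (N : nat) (f : 'I_N -> R) :
  (forall i, 0 <= f i <= 1) -> 0 <= mean f <= 1.
Proof.
case: N f => [|n] f f01; first by rewrite /mean big_ord0 mul0r lexx ler01.
have sum_le : \sum_(i < n.+1) f i <= n.+1%:R.
  rewrite -[X in _ <= X%:R](card_ord n.+1) -sumr_const.
  by apply: ler_sum => i _; case/andP: (f01 i).
rewrite /mean divr_ge0 ?sumr_ge0 //=; last by move=> i _; case/andP: (f01 i).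
by rewrite ler_pdivrMr ?mul1r.
Qed.

Lemma sum_mean_field_rhs (R : realType) (N : nat) (alpha xi : 'I_N -> R -> R) (s : R) :
  (0 < N)%N ->
  \sum_(i < N) mean_field_rhs alpha xi i s = - mean (alpha^~ s) * \sum_(i < N) xi i s.
Proof.
move=> N_gt0; have N_neq0 : N%:R != 0 :> R by rewrite pnatr_eq0 -lt0n.
rewrite /mean_field_rhs big_split /= sumrN -mulr_suml sumrB sumr_const card_ord /mean.
by field.
Qed.

Section mean_field_trajectory.
Local Open Scope classical_set_scope.
Local Open Scope ring_scope.
Context {R : realType} {N : nat} {T M : R} {alpha xi : 'I_N -> R -> R} {xi0 : 'I_N -> R}.
Hypotheses (N_gt0 : (0 < N)%N) (T_ge0 : 0 <= T).
Hypotheses (alpha_adm : admissible M T alpha) (xi_traj : trajectory T alpha xi0 xi).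
Notation mu := (@lebesgue_measure R).

Lemma within_continuous_mean :
  {within `[0, T], continuous (fun s => mean (fun j => xi j s))}.
Proof.
have sum_cont := within_continuous_sum (index_enum 'I_N) xi (fun i => (xi_traj i).1).
have -> : (fun s => mean (fun j => xi j s)) =
    (fun s => \sum_(i < N) xi i s) \* cst N%:R^-1 by [].
by move=> x; apply: continuousM; [exact: sum_cont|exact: cst_continuous].
Qed.

Lemma integrable_mean_field_rhs (i : 'I_N) :
  mu.-integrable `[0, T] (EFin \o mean_field_rhs alpha xi i).
Proof.
have [alpha_meas alpha01] := alpha_adm.
have compact_0T := @segment_compact R 0 T.
have xi_int := continuous_compact_integrable compact_0T (xi_traj i).1.
have mean_int := continuous_compact_integrable compact_0T within_continuous_mean.
have drag_int : mu.-integrable `[0, T]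
    ((EFin \o (fun s => (1 - alpha i s)%R)) \* (EFin \o (fun s => mean (fun j => xi j s))))%E.
  apply: integrableMr => //.
    exact: measurable_realfun.measurable_funB (measurable_cst _) (alpha_meas i).
  apply: (@bounded_of_normr_le _ _ _ _ 1) => s s_0T.
  have /andP[a_ge0 a_le1] := (alpha01 s s_0T).1 i.
  by rewrite ger0_norm ?subr_ge0 // lerBlDr lerDl.
by apply: eq_integrable (integrableD _ (integrableN xi_int) drag_int) => //= s _.
Qed.

Lemma trajectory_at0 (i : 'I_N) : xi i 0 = xi0 i.
Proof.
rewrite ((xi_traj i).2 0) ?set_itv1 ?Rintegral_set1 ?addr0 //.
by rewrite in_itv /= lexx T_ge0.
Qed.

Lemma sum_trajectory_eq (t : R) : 0 <= t <= T ->
  \sum_(i < N) xi i t = \sum_(i < N) xi i 0 +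
    \int[mu]_(s in `[0, t]) \sum_(i < N) mean_field_rhs alpha xi i s.
Proof.
move=> /andP[t_ge0 tT]; rewrite Rintegral_sum //; last first.
  move=> i; apply: integrableS (integrable_mean_field_rhs i) => // x /=.
  by rewrite !in_itv /= => /andP[-> /le_trans ->].
rewrite -big_split; apply: eq_bigr => i _ /=; rewrite trajectory_at0.
by apply: (xi_traj i).2; rewrite in_itv /= t_ge0 tT.
Qed.

Lemma mean_trajectory_gt0 (t : R) : 0 < mean xi0 -> 0 <= t <= T ->
  0 < mean (fun j => xi j t).
Proof.
move=> mean0_gt0 t_0T; have N_pos : 0 < N%:R :> R by rewrite ltr0n.
suff : 0 < \sum_(i < N) xi i t by move=> ?; exact: divr_gt0.
have [_ alpha01] := alpha_adm.
apply: (linear_decay_gt0 (T := T) (S := fun t => \sum_(i < N) xi i t)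
  (H := fun s => \sum_(i < N) mean_field_rhs alpha xi i s) (c := fun r => mean (alpha^~ r))) => //.
- exact: within_continuous_sum (index_enum 'I_N) xi (fun i => (xi_traj i).1).
- by apply: integrable_sum_fun => //; exact: integrable_mean_field_rhs.
- exact: sum_trajectory_eq.
- by move=> r _; exact: sum_mean_field_rhs.
- by move=> r r_0T; apply: mean_in01; apply: (alpha01 r _).1; rewrite in_itv.
under eq_bigr do rewrite trajectory_at0.
by rewrite -(divfK (lt0r_neq0 N_pos) (\sum_i xi0 i)) mulr_gt0.
Qed.

End mean_field_trajectory.

Theorem proposition4 (R : realType) (N : nat) (T M : R)
  (alpha xi lam : 'I_N -> R -> R) (xi0 : 'I_N -> R) :
  (0 < N)%N -> 0 < T -> 0 < M ->
  (* initial datum *)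
  0 < mean xi0 ->
  (forall i j : 'I_N, (i <= j)%N -> xi0 j <= xi0 i) ->
  (* alpha is an optimal control, xi its trajectory *)
  admissible M T alpha ->
  trajectory T alpha xi0 xi ->
  (forall (beta eta : 'I_N -> R -> R),
      admissible M T beta -> trajectory T beta xi0 eta ->
      cost T xi <= cost T eta) ->
  (* lambda is a PMP covector associated with alpha *)
  covector T alpha xi lam ->
  {ae (@lebesgue_measure R), forall t, `[0, T]%classic t ->
     forall a : 'I_N -> R, (forall i, 0 <= a i <= 1) -> \sum_(i < N) a i <= M ->
       - mean (fun j => xi j t) * (\sum_(i < N) alpha i t * lam i t)
         <= - mean (fun j => xi j t) * (\sum_(i < N) a i * lam i t)} ->
  {ae (@lebesgue_measure R), forall t, `[0, T]%classic t ->
     (Ilam lam t = finset.set0 -> forall i, alpha i t = 0) /\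
     (Ilamp lam t != finset.set0 ->
        (exists2 i, i \in Ilamp lam t & 0 < alpha i t) /\
        Num.min (#|Ilamp lam t|%:R) M <= \sum_(j < N) alpha j t)}.
Proof.
move=> N_gt0 T_gt0 M_gt0 mean0_gt0 _ alpha_adm xi_traj _ _ pmp.
apply: (filterS (Filter := ae_filter_ringOfSetsType _)) pmp => t pmp_t t_0T.
have [alpha01 alphaM] := alpha_adm.2 t t_0T.
have alpha_max (a : 'I_N -> R) : (forall i, 0 <= a i <= 1) -> \sum_(i < N) a i <= M ->
    \sum_(i < N) a i * lam i t <= \sum_(i < N) alpha i t * lam i t.
  move=> a01 aM; have := pmp_t t_0T a a01 aM; rewrite ler_nM2l // oppr_lt0.
  by apply: (mean_trajectory_gt0 N_gt0 (ltW T_gt0) alpha_adm xi_traj); rewrite -?in_itv.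
split.
  move=> Ilam0 i; apply: (maximizer_eq0 alpha01 alphaM alpha_max).
  have : i \notin Ilam lam t by rewrite Ilam0 inE.
  by rewrite inE -ltNge.
case/set0Pn=> p; rewrite inE => lam_p_gt0; split.
  have [i lam_i_gt0 alpha_i_gt0] := maximizer_gt0_at_pos_weight alpha01 alpha_max M_gt0
    (ex_intro _ p lam_p_gt0).
  by exists i; rewrite ?inE.
by rewrite /Ilamp; exact: maximizer_saturates alpha01 alpha_max.
Qed.
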